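(* Let $N\ge 2$, $C\ge 0$ and $k\ge 1$ be integers with $C<\frac{N-1}{2}$, $k\le N-1$, and $$\binom{N-1-C}{k}\ \ge\ \frac{1}{2}\binom{N-1}{k}.$$ Let $\mathcal{A}$ be a discrete (finite or countable) action space, $\mathcal{O}$ an observation space and $\mathcal{M}$ a message space, and let $\hat{\pi}:\mathcal{O}\times\mathcal{M}^k\to\mathcal{A}$ be any function (the ablation policy). Fix an observation $o\in\mathcal{O}$ and two message lists $\mathbf{m}_{\mathrm{benign}},\mathbf{m}_{\mathrm{adv}}\in\mathcal{M}^{N-1}$ that differ in at most $C$ coordinates. Define the benign action set $$\mathcal{A}_{\mathrm{benign}}:=\bigcup_{T\in\mathcal{H}(N-1,k)}\{\hat{\pi}(o,\mathsf{Ablate}(\mathbf{m}_{\mathrm{benign}},T))\},$$ for each $a\in\mathcal{A}$ define the vote count on the adversarial list $$u_a:=\sum_{T\in\mathcal{H}(N-1,k)}\mathbb{1}\big[\hat{\pi}(o,\mathsf{Ablate}(\mathbf{m}_{\mathrm{adv}},T))=a\big],$$ and let $\widetilde{a}=\widetilde{\pi}(o,\mathbf{m}_{\mathrm{adv}})\in\arg\max_{a\in\mathcal{A}}u_a$. If $$u_{\widetilde{a}}>\binom{N-1}{k}-\binom{N-1-C}{k},$$ then $\widetilde{a}\in\mathcal{A}_{\mathrm{benign}}$.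
   Context: For a list $\mathbf{m}=[m_1,\dots,m_n]$ and a set of indices $T=\{j_1<\dots<j_k\}\subseteq[n]$, $\mathsf{Ablate}(\mathbf{m},T):=[m_{j_1},\dots,m_{j_k}]$ keeps only the entries indexed by $T$. For integers $n\ge k\ge 1$, $\mathcal{H}(n,k)$ denotes the set of all $k$-element subsets of $[n]=\{1,\dots,n\}$, so $|\mathcal{H}(n,k)|=\binom{n}{k}$. Setting: an agent in a communicative multi-agent system receives $N-1$ messages from the other agents; an adversary may corrupt up to $C$ of them, so the received list $\mathbf{m}_{\mathrm{adv}}$ differs from the uncorrupted list $\mathbf{m}_{\mathrm{benign}}$ in at most $C$ positions. The ensemble policy $\widetilde{\pi}(o,\mathbf{m})$ outputs an action maximizing the number of size-$k$ index subsets $T$ on which $\hat{\pi}(o,\mathsf{Ablate}(\mathbf{m},T))$ equals that action. *)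

From mathcomp Require Import all_boot.
Set Implicit Arguments. Unset Strict Implicit. Unset Printing Implicit Defensive.

(* Ablate m T : the entries of m indexed by T, in increasing index order
   (enum of a set of ordinals lists them increasingly). *)
Definition Ablate (M : Type) (n : nat) (m : 'I_n -> M) (T : {set 'I_n}) : seq M :=
  [seq m i | i <- enum T].

Definition Hset (n k : nat) : {set {set 'I_n}} := [set T : {set 'I_n} | #|T| == k].

Definition votes (O M : Type) (A : eqType) (n k : nat)
  (pihat : O -> seq M -> A) (o : O) (m : 'I_n -> M) (a : A) : nat :=
  #|[set T in Hset n k | pihat o (Ablate m T) == a]|.

Definition benign_action (O M : Type) (A : Type) (n k : nat)
  (pihat : O -> seq M -> A) (o : O) (m : 'I_n -> M) (a : A) : Prop :=
  exists2 T, T \in Hset n k & pihat o (Ablate m T) = a.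

Definition ndiff (M : eqType) (n : nat) (m1 m2 : 'I_n -> M) : nat :=
  #|[set i : 'I_n | m1 i != m2 i]|.

From mathcomp Require Import all_boot.

(* If an ablation set T avoids every corrupted index, the ablated benign and
   adversarial lists coincide, so T votes for the same action on both.  The
   k-subsets meeting the at most C corrupted indices number at most
   'C(N-1, k) - 'C(N-1-C, k); an action with more votes than that must
   therefore receive a vote from some corruption-free T, i.e. it is benign. *)

Lemma Ablate_eq_in (M : Type) (n : nat) (m1 m2 : 'I_n -> M) (T : {set 'I_n}) :
  {in T, m1 =1 m2} -> Ablate m1 T = Ablate m2 T.
Proof. by move=> eq_m; apply/eq_in_map => i; rewrite mem_enum; apply: eq_m. Qed.

Lemma card_Hset_avoiding (n k : nat) (D : {set 'I_n}) :
  #|[set T in Hset n k | T \subset ~: D]| = 'C(n - #|D|, k).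
Proof.
have -> : [set T in Hset n k | T \subset ~: D]
          = [set T : {set 'I_n} | T \subset ~: D & #|T| == k].
  by apply/setP => T; rewrite !inE andbC.
by rewrite cards_draws cardsCs setCK card_ord.
Qed.

Lemma card_Hset_meeting (n k : nat) (D : {set 'I_n}) :
  #|[set T in Hset n k | ~~ (T \subset ~: D)]| = 'C(n, k) - 'C(n - #|D|, k).
Proof.
set avoiding := [set T : {set 'I_n} | T \subset ~: D].
have -> : [set T in Hset n k | ~~ (T \subset ~: D)] = Hset n k :\: avoiding.
  by apply/setP => T; rewrite !inE andbC.
have <- : #|Hset n k :&: avoiding| = 'C(n - #|D|, k).
  by rewrite -card_Hset_avoiding; apply: eq_card => T; rewrite !inE.
have card_Hset : #|Hset n k| = 'C(n, k) by rewrite card_draws card_ord.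
by rewrite -card_Hset -(cardsID avoiding (Hset n k)) addKn.
Qed.

Lemma benign_action_of_votes (O : Type) (M : eqType) (A : eqType) (n k : nat)
    (pihat : O -> seq M -> A) (o : O) (m1 m2 : 'I_n -> M) (a : A) :
  'C(n, k) - 'C(n - ndiff m1 m2, k) < votes k pihat o m2 a ->
  benign_action k pihat o m1 a.
Proof.
set D := [set i | m1 i != m2 i]; rewrite -card_Hset_meeting ltnNge => many_votes.
have [T] : exists2 T, T \in [set T in Hset n k | pihat o (Ablate m2 T) == a]
                      & T \notin [set T in Hset n k | ~~ (T \subset ~: D)].
  by apply/subsetPn; apply: contra many_votes; apply: subset_leq_card.
rewrite !inE => /andP [T_k /eqP <-]; rewrite T_k negbK => T_clean.
exists T; first by rewrite inE.
congr (pihat o _); apply: Ablate_eq_in => i /(subsetP T_clean).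
by rewrite !inE negbK => /eqP.
Qed.

Theorem theorem1 (N C k : nat) (hN : 2 <= N) (hC : 2 * C < N - 1)
    (hk1 : 1 <= k) (hk2 : k <= N - 1)
    (hbin : 'C(N - 1, k) <= 2 * 'C(N - 1 - C, k))
    (A : countType) (O : Type) (M : eqType)
    (pihat : O -> seq M -> A) (o : O) (mbenign madv : 'I_(N - 1) -> M)
    (hdiff : ndiff mbenign madv <= C)
    (atilde : A)
    (hargmax : forall a : A, votes k pihat o madv a <= votes k pihat o madv atilde)
    (hvote : 'C(N - 1, k) - 'C(N - 1 - C, k) < votes k pihat o madv atilde) :
  benign_action k pihat o mbenign atilde.
Proof.
apply: benign_action_of_votes; apply: leq_ltn_trans hvote.
by apply/leq_sub2l/leq_bin2l/leq_sub2l.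
Qed.
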